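(* Let $K$ be an imaginary quadratic field of class number $1$ with ring of integers $\mathcal{O}_K\subset\mathbb{C}$. Let $z_1,\dots,z_l\in\mathcal{O}_K$ with $\mathrm{Re}(z_j)\neq0$, and let $m_1,\dots,m_l,k$ be integers and $n\ge1$ an integer. If $$\frac{k\pi}{n}=\sum_{j=1}^{l}m_j\arctan\frac{\mathrm{Im}(z_j)}{\mathrm{Re}(z_j)},$$ then $\frac{k\pi}{n}=j\pi/4$ for some $j\in\mathbb{Z}$ if $K=\mathbb{Q}(\sqrt{-1})$, $\frac{k\pi}{n}=j\pi/6$ for some $j\in\mathbb{Z}$ if $K=\mathbb{Q}(\sqrt{-3})$, and $\frac{k\pi}{n}=j\pi/2$ for some $j\in\mathbb{Z}$ otherwise. *)

From mathcomp Require Import all_boot all_algebra.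
From mathcomp Require Export complex.
From mathcomp Require Export Rstruct.
From Stdlib Require Export Reals.
Import GRing.Theory Num.Theory.
Local Open Scope ring_scope.

Definition squarefree (d : nat) : Prop :=
  forall p : nat, (dvdn (p * p)%N d) -> p = 1%N.

Definition sqrt_neg (d : nat) : R[i] := Complex 0 (Num.sqrt (d%:R : R)).

Definition in_K (d : nat) (z : R[i]) : Prop :=
  exists x y : rat, z = ratr x + ratr y * sqrt_neg d.

Definition alg_int (z : R[i]) : Prop :=
  exists p : {poly int}, p \is monic /\ root (map_poly intr p) z.

Definition in_OK (d : nat) (z : R[i]) : Prop := in_K d z /\ alg_int z.

Definition is_ideal (d : nat) (I : R[i] -> Prop) : Prop :=
  [/\ (forall z, I z -> in_OK d z),
      I 0,
      (forall a b, I a -> I b -> I (a + b)) &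
      (forall r a, in_OK d r -> I a -> I (r * a))].

Definition is_principal (d : nat) (I : R[i] -> Prop) : Prop :=
  exists a, in_OK d a /\ forall z, I z <-> exists r, in_OK d r /\ z = r * a.

Definition class_number_one (d : nat) : Prop :=
  forall I, is_ideal d I -> is_principal d I.

From mathcomp Require Import all_boot all_algebra.
From mathcomp Require Import all_order ring lra zify.
Import Order.TTheory GRing.Theory Num.Theory.
Local Open Scope ring_scope.

(* Doubling turns arctan (Im z / Re z) into the argument of z / conj z, so
   phi = 2 k pi / n has cos phi rational and sin phi in Q sqrt d, i.e.
   e^(i phi) lies in Q(sqrt (-d)).  As phi is a rational multiple of pi, the
   Chebyshev recurrence for 2 cos (m phi) shows that the rational number
   2 cos phi is an integer (Niven), hence in [-2, 2].  Writing sin phi = b sqrt d,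
   4 d b^2 = 4 - (2 cos phi)^2 and squarefreeness of d leave three cases:
   sin phi = 0; or cos phi = 0 and d = 1; or 4 sin^2 phi = 3 and d = 3.  So phi
   is a multiple of pi, pi/2 or pi/3. *)

(* e^(i t) = a + b sqrt (-d) with a, b rational. *)
Definition Qd_angle (d : nat) (t : R) : Prop :=
  exists a b : rat, cos t = ratr a /\ sin t = ratr b * Num.sqrt (d%:R : R).

Section QdAngle.
Variable d : nat.
Let s := Num.sqrt (d%:R : R).
Let sqr_s : s ^+ 2 = d%:R.
Proof. by rewrite sqr_sqrtr ?ler0n. Qed.

Lemma Qd_angle0 : Qd_angle d 0.
Proof. by exists 1, 0; rewrite cos_0 sin_0 rmorph1 rmorph0 mul0r. Qed.

Lemma Qd_angleD t u : Qd_angle d t -> Qd_angle d u -> Qd_angle d (t + u)%R.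
Proof.
move=> [a [b [ct st]]] [a' [b' [cu su]]].
exists (a * a' - b * b' * d%:R), (b * a' + a * b').
rewrite cosD sinD ct st cu su !(rmorphB, rmorphD, rmorphM) rmorph_nat -/s -sqr_s; split; ring.
Qed.

Lemma Qd_angleN t : Qd_angle d t -> Qd_angle d (- t)%R.
Proof.
move=> [a [b [ct st]]]; exists a, (- b).
by rewrite cos_neg sin_neg ct st rmorphN mulNr.
Qed.

Lemma Qd_angleMz (m : int) t : Qd_angle d t -> Qd_angle d (m%:~R * t)%R.
Proof.
move=> Qt; have Qn (n : nat) : Qd_angle d (n%:R * t)%R.
  elim: n => [|n IHn]; first by rewrite mul0r; exact: Qd_angle0.
  by rewrite -natr1 mulrDl mul1r; exact: Qd_angleD.
by case: m => n; rewrite ?NegzE ?mulrNz ?mulNr; [|apply: Qd_angleN]; exact: Qn.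
Qed.

Lemma Qd_angle_sum l (m : 'I_l -> int) (t : 'I_l -> R) :
  (forall j, Qd_angle d (t j)) -> Qd_angle d (\sum_(j < l) (m j)%:~R * t j)%R.
Proof.
move=> Qt; apply: (big_ind (Qd_angle d)); [exact: Qd_angle0 | exact: Qd_angleD|].
by move=> j _; exact: Qd_angleMz.
Qed.

End QdAngle.

Lemma cos_sqr_atan (r : R) : cos (atan r) ^+ 2 = (1 + r ^+ 2)^-1.
Proof.
have pos : 0 <= 1 + r ^+ 2 by rewrite addr_ge0 ?sqr_ge0.
by rewrite cos_atan RdivE RsqrtE /Rsqr RplusE RmultE R1E mul1r exprVn -expr2 sqr_sqrtr.
Qed.

Lemma sin_atan_cos (r : R) : sin (atan r) = r * cos (atan r).
Proof. by rewrite sin_atan cos_atan !RdivE mulrA mulr1. Qed.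

Lemma cos_double_atan (r : R) : cos (2 * atan r)%R = (1 - r ^+ 2) / (1 + r ^+ 2).
Proof.
rewrite mulr_natl mulr2n cosD sin_atan_cos -cos_sqr_atan; ring.
Qed.

Lemma sin_double_atan (r : R) : sin (2 * atan r)%R = 2 * r / (1 + r ^+ 2).
Proof.
rewrite mulr_natl mulr2n sinD sin_atan_cos -cos_sqr_atan; ring.
Qed.

Lemma Qd_angle_double_arg d (z : R[i]) : in_K d z -> complex.Re z != 0 ->
  Qd_angle d (2 * atan (complex.Im z / complex.Re z))%R.
Proof.
move=> [x [y ->]] Re_neq0.
have ratrC (q : rat) : (ratr q : R[i]) = complex.Complex (ratr q) 0.
  by rewrite -(fmorph_rat (real_complex R)).
move: Re_neq0; rewrite /sqrt_neg !ratrC /= !(mulr0, mul0r, addr0, subr0, add0r).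
set s := Num.sqrt (d%:R : R) => x_neq0.
have sqr_s : s ^+ 2 = d%:R by rewrite sqr_sqrtr ?ler0n.
have den_neq0 : ratr x ^+ 2 + ratr y ^+ 2 * d%:R != 0 :> R.
  have x2_gt0 : 0 < ratr x ^+ 2 :> R by rewrite lt_def sqrf_eq0 x_neq0 sqr_ge0.
  have y2d_ge0 : 0 <= ratr y ^+ 2 * d%:R :> R by rewrite mulr_ge0 ?sqr_ge0 ?ler0n.
  by apply: lt0r_neq0; lra.
exists ((x ^+ 2 - y ^+ 2 * d%:R) / (x ^+ 2 + y ^+ 2 * d%:R)).
exists (2 * x * y / (x ^+ 2 + y ^+ 2 * d%:R)).
rewrite cos_double_atan sin_double_atan.
rewrite RdivE !(fmorphV, rmorphM, rmorphD, rmorphB, rmorphN, rmorphXn, rmorph_nat) -/s -sqr_s.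
by split; field; rewrite sqr_s (negPf x_neq0) den_neq0.
Qed.

Lemma cosD_add_cosB (a b : R) : (cos (a + b) + cos (a - b) = 2 * cos a * cos b)%R.
Proof. by rewrite !cosD cos_neg sin_neg RoppE; ring. Qed.

(* With c_m = 2 cos (m x) and c_1 = u / v, this is (v^m c_m, v^(m+1) c_(m+1)),
   computed from c_(m+2) = c_1 c_(m+1) - c_m. *)
Fixpoint scaled_cheb (u v : int) (m : nat) : int * int :=
  if m is m'.+1 then
    let: (a, b) := scaled_cheb u v m' in (b, u * b - v * v * a)
  else (2, u).

Lemma scaled_cheb_mod (u v : int) m : (v %| (scaled_cheb u v m).2 - u ^+ m.+1)%Z.
Proof.
elim: m => [|m] /=; first by rewrite expr1 subrr dvdz0.
case: (scaled_cheb u v m) => a b /= IH.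
have -> : u * b - v * v * a - u ^+ m.+2 = u * (b - u ^+ m.+1) - v * (v * a).
  by rewrite exprS; ring.
by apply: rpredB; [exact: dvdz_mull | exact: dvdz_mulr (dvdzz v)].
Qed.

Section Niven.
Variables (u v : int) (x : R).
Hypothesis two_cosE : (u%:~R : R) = v%:~R * (2 * cos x).

Lemma scaled_chebE m :
  ((scaled_cheb u v m).1%:~R = v%:~R ^+ m * (2 * cos (m%:R * x)%R) :> R) /\
  ((scaled_cheb u v m).2%:~R = v%:~R ^+ m.+1 * (2 * cos (m.+1%:R * x)%R) :> R).
Proof.
elim: m => [|m [IH1 IH2]] /=.
  by rewrite mul0r cos_0 mulr1 expr0 mul1r expr1 mul1r.
case: (scaled_cheb u v m) IH1 IH2 => a b /= IH1 IH2; split=> //.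
have cos_rec : cos (m.+2%:R * x)%R = 2 * cos x * cos (m.+1%:R * x)%R - cos (m%:R * x)%R.
  have -> : (m.+2%:R * x = m.+1%:R * x + x)%R by rewrite -natr1 mulrDl mul1r.
  have -> : (m%:R * x = m.+1%:R * x - x)%R by rewrite -natr1 mulrDl mul1r addrK.
  by rewrite mulrAC -cosD_add_cosB addrK.
rewrite intrB !intrM IH1 IH2 two_cosE cos_rec !exprS; ring.
Qed.
End Niven.

Lemma two_cos_int_of_periodic {x : R} {n : nat} {p : rat} : (0 < n)%N ->
  cos (n%:R * x)%R = 1 -> cos x = ratr p -> exists e : int, 2 * p = e%:~R.
Proof.
case: n => // n _ cos_nx cos_x.
set u := numq (2 * p); set v := denq (2 * p).
have two_cosE : (u%:~R : R) = v%:~R * (2 * cos x).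
  have /(congr1 (@ratr R)) := numqE (2 * p).
  by rewrite !rmorphM rmorph_nat !rmorph_int cos_x -/u -/v => ->; ring.
have cheb_n : (scaled_cheb u v n).2 = v ^+ n.+1 * 2.
  apply: (@intr_inj R); rewrite (proj2 (scaled_chebE u v x two_cosE n)) cos_nx.
  by rewrite intrM rmorphXn mulr1.
have v_dvd_un : (v %| u ^+ n.+1)%Z.
  have := scaled_cheb_mod u v n; rewrite cheb_n => v_dvd.
  have -> : u ^+ n.+1 = v ^+ n.+1 * 2 - (v ^+ n.+1 * 2 - u ^+ n.+1) by ring.
  by apply: rpredB => //; rewrite dvdz_mulr // dvdz_exp.
have v_eq1 : v = 1.
  move: v_dvd_un; rewrite dvdzE abszX => /gcdn_idPr.
  rewrite (eqP (coprimeXl n.+1 (coprime_num_den (2 * p)))) => /esym abs_v1.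
  by rewrite -[v]gez0_abs ?abs_v1 // ltW // denq_gt0.
by exists u; rewrite numqE -/v v_eq1 mulr1.
Qed.

Lemma squarefree1 : squarefree 1.
Proof. by move=> p; rewrite dvdn1 muln_eq1 => /andP[/eqP]. Qed.

Lemma squarefree3 : squarefree 3.
Proof. by move=> [|[|p]] // /dvdn_leq; nia. Qed.

Lemma squarefree_rat_sqr_eq {d c : nat} {q : rat} :
  squarefree d -> squarefree c -> d%:R * q ^+ 2 = c%:R -> d = c.
Proof.
move=> sqf_d sqf_c dq2_c.
set a := `|numq q|%N; set b := `|denq q|%N.
have cop_ab : coprime (a * a) (b * b).
  by rewrite !mulnn coprimeXl // coprimeXr // coprime_num_den.
have dac : (d * (a * a) = c * (b * b))%N.
  have dac_int : d%:Z * (numq q * numq q) = c%:Z * (denq q * denq q).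
    by apply: (@intr_inj rat); rewrite !intrM numqE -!pmulrn -dq2_c; ring.
  by have := congr1 absz dac_int; rewrite !abszM.
have a_eq1 : a = 1%N by apply: sqf_c; rewrite -(Gauss_dvdl _ cop_ab) -dac dvdn_mull.
move: dac; rewrite a_eq1 !muln1 => d_cb2.
have b_eq1 : b = 1%N by apply: sqf_d; rewrite d_cb2 dvdn_mull.
by rewrite d_cb2 b_eq1 !muln1.
Qed.

Lemma IZR_intr (z : BinNums.Z) : exists j : int, IZR z = j%:~R.
Proof.
case: z => [|p|p]; first by exists 0.
  by exists (nat_of_pos p)%:Z; rewrite IZRposE INRE.
by exists (- (nat_of_pos p)%:Z); rewrite -Pos2Z.opp_pos opp_IZR IZRposE INRE mulrNz.
Qed.

Lemma sin_eq0_intPI (y : R) : sin y = 0 -> exists j : int, y = j%:~R * PI.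
Proof. by move=> /sin_eq_0_0 [z ->]; have [j ->] := IZR_intr z; exists j. Qed.

Lemma cos_int2PI (k : int) : cos (k%:~R * (2 * PI))%R = 1.
Proof.
have cos_nat2PI (m : nat) : cos (m%:R * (2 * PI))%R = 1.
  have cos2PI : cos (2 * PI)%R = 1 by exact: cos_2PI.
  have sin2PI : sin (2 * PI)%R = 0 by exact: sin_2PI.
  elim: m => [|m IH]; first by rewrite mul0r cos_0.
  by rewrite -natr1 mulrDl mul1r cosD IH cos2PI sin2PI mulr1 mulr0 subr0.
by case: k => m; rewrite ?NegzE ?mulrNz ?mulNr ?cos_neg cos_nat2PI.
Qed.

Lemma sin_mul3 (x : R) : sin (3%:R * x)%R = sin x * (3%:R - 4%:R * sin x ^+ 2).
Proof.
have := sin2_cos2 x; rewrite /Rsqr RplusE !RmultE R1E => pyth.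
rewrite mulr_natl !mulrS mulr0n addr0 !sinD !cosD.
apply/eqP; rewrite -subr_eq0; apply/eqP.
transitivity (3%:R * sin x * (sin x * sin x + cos x * cos x - 1)); first ring.
by rewrite pyth subrr mulr0.
Qed.

Lemma Qd_angle_int_cos_cases {d : nat} {phi : R} {e : int} :
  squarefree d -> Qd_angle d phi -> 2 * cos phi = e%:~R ->
  [\/ sin phi = 0, d = 1%N /\ cos phi = 0 | d = 3%N /\ 4%:R * sin phi ^+ 2 = 3%:R].
Proof.
move=> sqf_d [a [b [cos_phi sin_phi]]] two_cos.
have pyth : sin phi ^+ 2 + cos phi ^+ 2 = 1.
  by have := sin2_cos2 phi; rewrite /Rsqr RplusE !RmultE R1E -!expr2.
have four_sin2 : 4%:R * sin phi ^+ 2 = 4%:R - (e * e)%:~R.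
  by rewrite intrM -two_cos; lra.
have d_sqr : d%:R * (2 * b) ^+ 2 = 4%:R - (e * e)%:~R.
  apply: (fmorph_inj (@ratr R)).
  rewrite [RHS]rmorphB [in RHS]rmorph_nat [in RHS]rmorph_int -four_sin2 sin_phi.
  by rewrite !(rmorphM, rmorphXn, rmorph_nat) exprMn sqr_sqrtr ?ler0n //; ring.
have ee_le4 : e * e <= 4.
  have : ((e * e)%:~R : R) <= (4 : int)%:~R.
    by rewrite -pmulrn; have := sqr_ge0 (sin phi); lra.
  by rewrite ler_int.
have : [\/ e * e = 0, e * e = 1 | e * e = 4].
  have : e = 0 \/ e = 1 \/ e = -1 \/ e = 2 \/ e = -2 by nia.
  by case=> [|[|[|[|]]]] ->;
    [apply: Or31 | apply: Or32 | apply: Or32 | apply: Or33 | apply: Or33].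
case=> ee; rewrite ee -pmulrn in four_sin2 d_sqr.
- have e0 : e = 0 by apply/eqP; rewrite -[e == 0]orbb -mulf_eq0 ee.
  apply: Or32; split; last by move: two_cos; rewrite e0; lra.
  by apply: (squarefree_rat_sqr_eq (q := b) sqf_d squarefree1); nra.
- apply: Or33; split=> //; last by lra.
  exact: (squarefree_rat_sqr_eq sqf_d squarefree3 d_sqr).
- by apply: Or31; apply/eqP; rewrite -(sqrf_eq0 (sin phi)); lra.
Qed.

(* Half the number of roots of unity in Q(sqrt (-d)). *)
Definition half_units_card (d : nat) : nat :=
  if d == 1%N then 2 else if d == 3%N then 3 else 1.

Lemma Qd_angle_int_cos_PI_multiple {d : nat} {phi : R} {e : int} :
  squarefree d -> Qd_angle d phi -> 2 * cos phi = e%:~R ->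
  exists j : int, ((half_units_card d)%:R * phi)%R = j%:~R * PI.
Proof.
move=> sqf_d Qphi two_cos; apply: sin_eq0_intPI.
have sin2 : sin (2%:R * phi)%R = 2 * sin phi * cos phi.
  by rewrite mulr_natl mulr2n sinD; ring.
case: (Qd_angle_int_cos_cases sqf_d Qphi two_cos) => [sin0|[d1 cos0]|[d3 sin_sqr]].
- rewrite /half_units_card; case: ifP => _; first by rewrite sin2 sin0 !mulr0 mul0r.
  by case: ifP => _; rewrite ?sin_mul3 ?mul1r sin0 ?mul0r.
- by rewrite d1 /= sin2 cos0 mulr0.
- by rewrite d3 /= sin_mul3 sin_sqr subrr mulr0.
Qed.

Theorem corollary4p3 (d : nat) (hd : (0 < d)%N) (hsq : squarefree d)
    (hcl : class_number_one d)
    (l : nat) (z : 'I_l -> R[i]) (m : 'I_l -> int) (k : int) (n : nat)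
    (hn : (1 <= n)%N)
    (hz : forall j, in_OK d (z j))
    (hre : forall j, complex.Re (z j) != 0)
    (heq : (k%:~R * PI / n%:R : R) =
           \sum_(j < l) (m j)%:~R * atan (complex.Im (z j) / complex.Re (z j))) :
  exists j : int,
    (k%:~R * PI / n%:R : R) =
      j%:~R * PI / (if d == 1%N then 4 else if d == 3%N then 6 else 2).
Proof.
set theta := (k%:~R * PI / n%:R : R).
have Q2theta : Qd_angle d (2 * theta)%R.
  rewrite /theta heq mulr_sumr.
  under eq_bigr => j _ do rewrite mulrCA.
  by apply: Qd_angle_sum => j; apply: Qd_angle_double_arg; [case: (hz j) | exact: hre].
have [a [b [cos_2theta _]]] := Q2theta.
have n_periodic : cos (n%:R * (2 * theta))%R = 1.
  have n_neq0 : (n%:R : R) != 0 by rewrite pnatr_eq0 -lt0n.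
  have -> : (n%:R * (2 * theta) = k%:~R * (2 * PI))%R by rewrite /theta RdivE RmultE; field.
  exact: cos_int2PI.
have [e two_cos] := two_cos_int_of_periodic hn n_periodic cos_2theta.
have two_cosE : 2 * cos (2 * theta)%R = e%:~R.
  by rewrite cos_2theta -(rmorph_int (@ratr R)) -two_cos rmorphM rmorph_nat.
have [j Nphi] := Qd_angle_int_cos_PI_multiple hsq Q2theta two_cosE.
exists j; rewrite -Nphi.
by rewrite /half_units_card; case: ifP => _; [|case: ifP => _]; field.
Qed.
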